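(* Let $L$ be a shift having left special factors of arbitrarily large length, and let $\mu$ be a $\sigma$-invariant, nonatomic, regular Borel probability measure on $L$, positive on nonempty cylinders, with $\mu(SP_L)=0$. Let $V=\{v^{(k)}\}_{k>0}$ be as defined below. Then $V$ is infinite and $L=\bigsqcup_{k>0}Cyl_L(v^{(k)})\sqcup W_{SP_L}$, a disjoint union, where $W_{SP_L}=\sigma^{-1}(SP_L)$. Moreover: (i) for every $k$ and all $w<w'$ in $Cyl_L(v^{(k)})$, $\sigma([w,w'])=[\sigma(w),\sigma(w')]$; (ii) $W_{SP_L}$ is nonempty, has $\mu$-measure $0$, and consists exactly of the accumulation points in $L$ of the set of endpoints (smallest and greatest words) of the cylinders $Cyl_L(v^{(k)})$.
   Context: $A$ is a finite totally ordered alphabet. $A^{\mathbb N}$ has the lexicographic order and the Cantor topology, and $\sigma$ deletes the first letter. A shift is a closed $L\subseteq A^{\mathbb N}$ with $\sigma(L)\subseteq L$. $Fact_L$ is the set of finite factors of words of $L$, and $Cyl_L(v)=\{w\in L: v \text{ prefix of } w\}$. For $w\le w'$ in $L$, $[w,w']=\{w''\in L:w\le w''\le w'\}$. A factor $u\in Fact_L$ is left special if $bu\in Fact_L$ for at least two distinct $b\in A$. $SP_L$ is the set of infinite words all of whose finite prefixes are left special factors of $L$. Let $V=\{v^{(k)}\}_{k>0}$ be an enumeration of the set of words $au\in Fact_L$ with $a\in A$ and $u$ a nonempty word such that $u$ is not left special while every nonempty proper prefix of $u$ is left special. These are the cylinders produced by iteratively refining $CYL_L(n)$, stopping at cylinders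 $Cyl_L(au)$ with $u$ not left special. *)

From Stdlib Require Import Reals.
From mathcomp Require Import all_boot all_order.
Set Implicit Arguments.
Unset Strict Implicit.
Unset Printing Implicit Defensive.

Definition word (A : Type) := nat -> A.

Definition shift (A : Type) (w : word A) : word A := fun n => w n.+1.

Fixpoint is_prefix (A : Type) (v : seq A) (w : word A) : Prop :=
  match v with
  | [::] => True
  | a :: v' => w 0 = a /\ is_prefix v' (shift w)
  end.

Definition is_factor (A : Type) (u : seq A) (w : word A) : Prop :=
  exists i, is_prefix u (fun n => w (i + n)).

Definition agree (A : Type) (n : nat) (w w' : word A) : Prop :=
  forall i, (i < n)%N -> w i = w' i.

Definition is_open (A : Type) (U : word A -> Prop) : Prop :=
  forall w, U w -> exists n, forall w', agree n w w' -> U w'.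
Definition is_closed (A : Type) (F : word A -> Prop) : Prop :=
  is_open (fun w => ~ F w).

Definition is_shift (A : Type) (L : word A -> Prop) : Prop :=
  is_closed L /\ forall w, L w -> L (shift w).

Definition Fact (A : Type) (L : word A -> Prop) (u : seq A) : Prop :=
  exists w, L w /\ is_factor u w.

Definition left_special (A : Type) (L : word A -> Prop) (u : seq A) : Prop :=
  exists b b' : A, b <> b' /\ Fact L (b :: u) /\ Fact L (b' :: u).

Definition SP_set (A : Type) (L : word A -> Prop) (w : word A) : Prop :=
  forall n, left_special L (mkseq w n).

Definition Cyl (A : Type) (L : word A -> Prop) (v : seq A) (w : word A) : Prop :=
  L w /\ is_prefix v w.

Definition In_V (A : Type) (L : word A -> Prop) (v : seq A) : Prop :=
  exists (a : A) (u : seq A), v = a :: u /\ Fact L v /\ u <> [::] /\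
    ~ left_special L u /\
    (forall n, (0 < n)%N -> (n < size u)%N -> left_special L (take n u)).

Definition W_SP (A : Type) (L : word A -> Prop) (w : word A) : Prop :=
  L w /\ SP_set L (shift w).

Definition lex_lt (d : Order.disp_t) (A : orderType d) (w w' : word A) : Prop :=
  exists n, agree n w w' /\ (w n < w' n)%O.
Definition lex_le (d : Order.disp_t) (A : orderType d) (w w' : word A) : Prop :=
  (forall i, w i = w' i) \/ lex_lt w w'.

Definition interval (d : Order.disp_t) (A : orderType d) (L : word A -> Prop)
  (w w' x : word A) : Prop :=
  L x /\ lex_le w x /\ lex_le x w'.

Definition is_endpoint (d : Order.disp_t) (A : orderType d) (L : word A -> Prop)
  (e : word A) : Prop :=
  exists v, In_V L v /\ Cyl L v e /\
    ((forall x, Cyl L v x -> lex_le e x) \/ (forall x, Cyl L v x -> lex_le x e)).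

Definition acc_point (A : Type) (L : word A -> Prop) (E : word A -> Prop)
  (x : word A) : Prop :=
  L x /\ forall n, exists e, E e /\ ~ (forall i, e i = x i) /\ agree n x e.

Inductive borel (A : Type) : (word A -> Prop) -> Prop :=
| borel_open U : is_open U -> borel U
| borel_compl B : borel B -> borel (fun w => ~ B w)
| borel_union (F : nat -> word A -> Prop) :
    (forall n, borel (F n)) -> borel (fun w => exists n, F n w).

Definition meas_L (A : Type) (L : word A -> Prop) (B : word A -> Prop) : Prop :=
  exists B', borel B' /\ forall w, B w <-> (L w /\ B' w).

(* mu is a Borel probability measure on L (its values outside Borel sets
   of L are irrelevant) *)
Definition prob_measure (A : Type) (L : word A -> Prop)
  (mu : (word A -> Prop) -> R) : Prop :=
  (forall B, meas_L L B -> Rle R0 (mu B)) /\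
  mu L = R1 /\
  (forall F : nat -> word A -> Prop,
     (forall n, meas_L L (F n)) ->
     (forall m n, m <> n -> forall w, ~ (F m w /\ F n w)) ->
     infinite_sum (fun n => mu (F n)) (mu (fun w => exists n, F n w))).

Definition sigma_invariant (A : Type) (L : word A -> Prop)
  (mu : (word A -> Prop) -> R) : Prop :=
  forall B, meas_L L B -> mu (fun w => L w /\ B (shift w)) = mu B.

Definition nonatomic (A : Type) (L : word A -> Prop)
  (mu : (word A -> Prop) -> R) : Prop :=
  ~ exists B, meas_L L B /\ Rlt R0 (mu B) /\
      forall C, meas_L L C -> (forall w, C w -> B w) -> mu C = R0 \/ mu C = mu B.

(* regular: outer regular by (relatively) open sets, inner regular by
   closed (= compact, A^N being compact) subsets *)
Definition regular (A : Type) (L : word A -> Prop)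
  (mu : (word A -> Prop) -> R) : Prop :=
  forall B, meas_L L B -> forall eps, Rlt R0 eps ->
    (exists O, is_open O /\ (forall w, B w -> O w) /\
        Rle (mu (fun w => L w /\ O w)) (Rplus (mu B) eps)) /\
    (exists K, is_closed K /\ (forall w, K w -> B w) /\
        Rle (Rminus (mu B) eps) (mu K)).

Definition positive_on_cylinders (A : Type) (L : word A -> Prop)
  (mu : (word A -> Prop) -> R) : Prop :=
  forall v : seq A, (exists w, Cyl L v w) -> Rlt R0 (mu (Cyl L v)).

(* A word w of L either has sigma(w) in SP_L, i.e. w lies in W_{SP_L}, or the
   shortest non-left-special prefix u of sigma(w) gives the unique v = w_0 u in V
   with w in Cyl_L(v).  Invariance and positivity of mu give every factor a left
   extension, and mu(W_{SP_L}) = mu(SP_L) = 0 forces every nonempty cylinder to meet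
   the complement of W_{SP_L}.  Hence below a long left special factor, and around
   every point of W_{SP_L}, there are cylinders of V of arbitrarily large level: V is
   infinite, and the lexicographic minima of these cylinders (which exist by
   compactness) accumulate at each point of W_{SP_L}.  Conversely a point of Cyl_L(v)
   is isolated from all endpoints except the two of Cyl_L(v).  For (i), since u is not
   left special, w_0 is the only letter that extends a factor beginning with u to the
   left.  Finally W_{SP_L} is nonempty by Koenig's lemma on left special factors. *)

From Stdlib Require Import Reals Lra Wf_nat.
From Stdlib Require Import Classical ClassicalEpsilon FunctionalExtensionality PropExtensionality.
From mathcomp Require Import all_boot all_order zify.
Import Order.TTheory.
Set Implicit Arguments.
Unset Strict Implicit.
Unset Printing Implicit Defensive.

Lemma ex_minimal (P : nat -> Prop) :
  (exists n, P n) -> exists n, P n /\ forall m, (m < n)%N -> ~ P m.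
Proof.
move=> /(@dec_inh_nat_subset_has_unique_least_element P (fun n => classic (P n))).
by move=> [n [[Pn n_min] _]]; exists n; split=> // m mn /n_min; lia.
Qed.

Section Words.
Variable T : Type.
Implicit Types (w x y : word T) (p u : seq T).

Definition wcons (a : T) x : word T := fun n => if n is k.+1 then x k else a.

Lemma mkseq_shift w n : mkseq w n.+1 = w 0 :: mkseq (shift w) n.
Proof.
rewrite /mkseq /= -add1n iotaDl -map_comp.
by congr (_ :: _); apply: eq_map => i /=; rewrite /shift add1n.
Qed.

Lemma mkseq_wcons a x n : mkseq (wcons a x) n.+1 = a :: mkseq x n.
Proof. exact: mkseq_shift. Qed.

Lemma take_mkseq w k n : (k <= n)%N -> take k (mkseq w n) = mkseq w k.
Proof.
move=> kn; rewrite /mkseq -map_take; congr map.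
by rewrite -{1}(subnKC kn) iotaD take_size_cat // size_iota.
Qed.

Lemma prefixE p w : is_prefix p w <-> mkseq w (size p) = p.
Proof.
elim: p w => [|a p IH] w //=; rewrite mkseq_shift; split.
  by case=> -> /IH ->.
by case=> -> /IH.
Qed.

Lemma agreeE n w w' : agree n w w' <-> mkseq w n = mkseq w' n.
Proof.
split=> [ag | E i lt_in]; first by apply/eq_in_map => i; rewrite mem_iota => /andP[_ /ag].
by have := congr1 (nth (w 0) ^~ i) E; rewrite !nth_mkseq.
Qed.

Lemma prefix_take p k w : is_prefix p w -> is_prefix (take k p) w.
Proof.
elim: p k w => [|a p IH] [|k] w //=.
by case=> -> /IH.
Qed.

Lemma agree_le m n w w' : (m <= n)%N -> agree n w w' -> agree m w w'.
Proof. by move=> mn ag i im; apply: ag; lia. Qed.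

Lemma agree_sym n w w' : agree n w w' -> agree n w' w.
Proof. by move=> ag i /ag ->. Qed.

Lemma agree_trans n w w' w'' : agree n w w' -> agree n w' w'' -> agree n w w''.
Proof. by move=> ag ag' i lt_in; rewrite ag // ag'. Qed.

Lemma prefix_agree p w w' : is_prefix p w -> agree (size p) w w' -> is_prefix p w'.
Proof. by move=> /prefixE pw /agreeE E; apply/prefixE; rewrite -E. Qed.

Lemma agree_prefix p w w' : is_prefix p w -> is_prefix p w' -> agree (size p) w w'.
Proof. by move=> /prefixE pw /prefixE pw'; apply/agreeE; rewrite pw pw'. Qed.

Lemma prefix_mkseq w n : is_prefix (mkseq w n) w.
Proof. by apply/prefixE; rewrite size_mkseq. Qed.

Lemma closed_mem (F : word T -> Prop) w :
  is_closed F -> (forall n, exists w', F w' /\ agree n w w') -> F w.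
Proof.
move=> F_closed near_F; apply: NNPP => /F_closed [n notF].
by have [w' [Fw' /notF]] := near_F n.
Qed.

Lemma exists_first_diff x y : x <> y -> exists k, agree k x y /\ x k <> y k.
Proof.
move=> ne; have [|k [ne_k min_k]] := ex_minimal (P := fun k => x k <> y k).
  apply: NNPP => all_eq; apply: ne; apply: functional_extensionality => i.
  by apply: NNPP => ?; apply: all_eq; exists i.
by exists k; split=> // i /min_k /NNPP.
Qed.

Lemma agree_neq x a : exists N, forall e, agree N x e -> e <> x -> e <> a.
Proof.
have [-> | /exists_first_diff [k [_ ne_k]]] := classic (a = x); first by exists 0.
by exists k.+1 => e ag _ ea; apply: ne_k; rewrite -ea ag.
Qed.

Lemma acc_point_avoid (L E : word T -> Prop) x n a b :
  acc_point L E x -> exists e, E e /\ agree n x e /\ e <> x /\ e <> a /\ e <> b.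
Proof.
move=> [_ acc]; have [Na Ha] := agree_neq x a; have [Nb Hb] := agree_neq x b.
have [e [Ee [ne ag]]] := acc (n + Na + Nb)%N.
have ex : e <> x by move=> ex; apply: ne; rewrite ex.
exists e; do !split=> //; [apply: agree_le ag; lia | apply: Ha ex | apply: Hb ex];
  apply: agree_le ag; lia.
Qed.

Lemma dependent_choice_word (good : seq T -> Prop) (Q : seq T -> T -> Prop) (a0 : T) :
  good [::] -> (forall u, good u -> exists a, Q u a /\ good (rcons u a)) ->
  exists x : word T, forall n, good (mkseq x n) /\ Q (mkseq x n) (x n).
Proof.
move=> good0 step.
pose next u := match excluded_middle_informative (good u) with
  | left gu => proj1_sig (constructive_indefinite_description _ (step u gu))
  | right _ => a0 end.
have nextP u : good u -> Q u (next u) /\ good (rcons u (next u)).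
  rewrite /next => gu; case: excluded_middle_informative => // gu'.
  by case: constructive_indefinite_description.
pose fix pre n := if n is k.+1 then rcons (pre k) (next (pre k)) else [::].
have good_pre n : good (pre n) by elim: n => //= n /nextP [].
have preE n : mkseq (fun n => next (pre n)) n = pre n by elim: n => //= n IH; rewrite mkseqS IH.
by exists (fun n => next (pre n)) => n; rewrite preE; case: (nextP _ (good_pre n)).
Qed.

End Words.

Section Lex.
Variables (d : Order.disp_t) (A : orderType d).
Implicit Types (w x y : word A).

Lemma lex_le_agree x y i : lex_le x y -> agree i x y -> (x i <= y i)%O.
Proof.
case=> [-> // | [n [ag_n lt_n]] ag_i].
case: (ltngtP n i) => [/ag_i | /ag_n -> // | <-]; last exact: ltW.
by move=> E; move: lt_n; rewrite E ltxx.
Qed.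

Lemma lex_le_anti x y : lex_le x y -> lex_le y x -> x = y.
Proof.
move=> xy yx; apply: functional_extensionality; case: xy => [// | [n [ag_n lt_n]]].
have := lex_le_agree yx (agree_sym ag_n).
by rewrite leNgt lt_n.
Qed.

Lemma lex_le_between_agree n x y z :
  agree n x z -> lex_le x y -> lex_le y z -> agree n x y.
Proof.
elim: n => [|n IH] xz xy yz; first by move=> i; lia.
have ag : agree n x y by apply: IH => //; apply: agree_le xz.
move=> i; rewrite ltnS leq_eqVlt => /orP [/eqP -> | /ag //].
apply: le_anti; rewrite (lex_le_agree xy ag) (xz n) //=.
apply: (lex_le_agree yz); apply: agree_trans (agree_sym ag) (agree_le _ xz); lia.
Qed.

Lemma lex_le_between_prefix (p : seq A) x y z : is_prefix p x -> is_prefix p z ->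
  lex_le x y -> lex_le y z -> is_prefix p y.
Proof.
move=> px pz xy yz; apply: (prefix_agree px).
exact: lex_le_between_agree (agree_prefix px pz) xy yz.
Qed.

Lemma lex_le_shift x y : x 0 = y 0 -> lex_le x y <-> lex_le (shift x) (shift y).
Proof.
move=> e0; split.
- case=> [E | [[|n] [ag lt]]]; [by left=> i; apply: E | by move: lt; rewrite e0 ltxx |].
  by right; exists n; split=> // i lt_in; apply: ag.
- case=> [E | [n [ag lt]]].
    by left=> -[|i] //; apply: E.
  by right; exists n.+1; split=> // -[|i] lt_in //; apply: ag.
Qed.

End Lex.

Lemma finite_pigeonhole (T : finType) (P : T -> nat -> Prop) :
  (forall b m n, (m <= n)%N -> P b n -> P b m) ->
  (forall n, exists b, P b n) -> exists b, forall n, P b n.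
Proof.
move=> P_anti P_ex; apply: NNPP => none.
suff [N N_none] : exists N, forall b, b \in enum T -> ~ P b N.
  by have [b Pb] := P_ex N; apply: (N_none b _ Pb); rewrite mem_enum.
elim: (enum T) => [|a s [N N_none]]; first by exists 0.
have [Na not_Pa] : exists Na, ~ P a Na.
  by apply: NNPP => all_Pa; apply: none; exists a => n; apply: NNPP => ?; apply: all_Pa; exists n.
exists (N + Na)%N => b; rewrite in_cons => /orP [/eqP -> | bs] Pb.
  by apply/not_Pa/(P_anti _ _ _ _ Pb); lia.
by apply/(N_none b bs)/(P_anti _ _ _ _ Pb); lia.
Qed.

Section FiniteAlphabet.
Variables (d : Order.disp_t) (A : finOrderType d).

Lemma ex_min_letter (P : A -> Prop) :
  (exists a, P a) -> exists m, P m /\ forall b, P b -> (m <= b)%O.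
Proof.
pose Pb := [pred a | if excluded_middle_informative (P a) then true else false].
have PbE a : Pb a <-> P a by rewrite /Pb /=; case: excluded_middle_informative.
move=> [a0 /PbE Pa0]; case: (arg_minP id Pa0) => m /PbE Pm m_min.
by exists m; split=> // b /PbE; apply: m_min.
Qed.

Lemma closed_lex_min (F : word A -> Prop) :
  is_closed F -> (exists w, F w) -> exists m, F m /\ forall y, F y -> lex_le m y.
Proof.
move=> F_closed [w0 Fw0].
pose good u := exists c, F c /\ is_prefix u c.
have step u : good u ->
    exists a, (forall b, good (rcons u b) -> (a <= b)%O) /\ good (rcons u a).
  move=> [c [Fc pc]]; have [|a [ga a_min]] := ex_min_letter (P := fun a => good (rcons u a)).
    exists (c (size u)), c; split=> //; apply/prefixE.
    by rewrite size_rcons mkseqS; move/prefixE: pc => ->.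
  by exists a.
have [m m_good] := dependent_choice_word (w0 0) (ex_intro _ w0 (conj Fw0 I)) step.
exists m; split.
  apply: closed_mem F_closed _ => n; have [[c [Fc pc]] _] := m_good n.
  by exists c; split=> //; apply/agreeE; move/prefixE: pc; rewrite size_mkseq.
move=> y Fy; case: (classic (m = y)) => [-> | /exists_first_diff [k [ag ne]]]; first by left.
right; exists k; split=> //; rewrite lt_neqAle; apply/andP; split; first exact/eqP.
apply: (m_good k).2; exists y; split=> //; apply/prefixE.
by rewrite size_rcons size_mkseq mkseqS; move/agreeE: ag => ->.
Qed.

End FiniteAlphabet.

Section ShiftSpace.
Variables (T : Type) (L : word T -> Prop).
Hypothesis hL : is_shift L.
Implicit Types (w x : word T) (p u v : seq T).

Lemma shift_iter_mem w i : L w -> L (fun n => w (i + n)).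
Proof.
move=> Lw; elim: i => [|i IH]; first by rewrite (_ : (fun n => _) = w).
rewrite (_ : (fun n => _) = shift (fun n => w (i + n))); first exact: hL.2.
by apply: functional_extensionality => n; rewrite /shift addSnnS.
Qed.

Lemma FactE u : Fact L u <-> exists w, L w /\ is_prefix u w.
Proof.
split=> [[w [Lw [i pw]]] | [w [Lw pw]]]; last by exists w; split=> //; exists 0.
by exists (fun n => w (i + n)); split=> //; apply: shift_iter_mem.
Qed.

Lemma Fact_take u k : Fact L u -> Fact L (take k u).
Proof. by move/FactE => [w [Lw pw]]; apply/FactE; exists w; split=> //; apply: prefix_take. Qed.

Lemma Fact_behead b u : Fact L (b :: u) -> Fact L u.
Proof.
by move/FactE => [w [Lw [_ pw]]]; apply/FactE; exists (shift w); split=> //; apply: hL.2.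
Qed.

Lemma left_special_take u k : left_special L u -> left_special L (take k u).
Proof.
case=> b [b' [ne [Fb Fb']]]; exists b, b'.
by split; [|split; [exact: (Fact_take k.+1 Fb) | exact: (Fact_take k.+1 Fb')]].
Qed.

Lemma left_special_nil : (exists u, left_special L u) -> left_special L [::].
Proof. by case=> u /(left_special_take 0); rewrite take0. Qed.

Lemma is_closed_Cyl v : is_closed (Cyl L v).
Proof.
move=> w nC; case: (classic (L w)) => [Lw | /hL.1 [n notL]].
  exists (size v) => w' ag [_ pw']; apply: nC; split=> //.
  exact: prefix_agree pw' (agree_sym ag).
by exists n => w' /notL nL' [].
Qed.

Lemma SP_subset w : SP_set L w -> L w.
Proof.
move=> SP; apply: closed_mem hL.1 _ => n.
have [b [_ [_ [/Fact_behead /FactE [w' [Lw' pw']] _]]]] := SP n.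
by exists w'; split=> //; apply/agreeE; move/prefixE: pw'; rewrite size_mkseq.
Qed.

Lemma is_closed_SP : is_closed (SP_set L).
Proof.
move=> w nSP; have [n not_ls] : exists n, ~ left_special L (mkseq w n).
  by apply: NNPP => all_ls; apply: nSP => n; apply: NNPP => ?; apply: all_ls; exists n.
by exists n => w' /agreeE E SP'; apply: not_ls; rewrite E.
Qed.

Lemma is_closed_W : is_closed (W_SP L).
Proof.
move=> w nW; case: (classic (L w)) => [Lw | /hL.1 [n notL]]; last first.
  by exists n => w' /notL nL' [].
have [n notSP] := is_closed_SP (fun SP => nW (conj Lw SP)).
by exists n.+1 => w' ag [_ SP']; apply: (notSP (shift w')) => // i lt_in; apply: ag.
Qed.

Lemma wcons_mem a x : (forall n, Fact L (a :: mkseq x n)) -> L (wcons a x).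
Proof.
move=> F_ax; apply: closed_mem hL.1 _ => n.
have /FactE [w [Lw pw]] := F_ax n; exists w; split=> //.
apply: (agree_le (n := n.+1)); first lia.
by apply/agreeE; move/prefixE: pw; rewrite mkseq_wcons /= size_mkseq => ->.
Qed.

Lemma In_V_Cyl_decomp v w : In_V L v -> Cyl L v w ->
  exists u, v = w 0 :: u /\ (0 < size u)%N /\ mkseq (shift w) (size u) = u /\
    ~ left_special L u /\ forall n, (0 < n)%N -> (n < size u)%N -> left_special L (take n u).
Proof.
case=> a [u [-> [_ [u_nil [not_ls ls_take]]]]] [_ [-> /prefixE pu]].
by exists u; do !split=> //; case: (u) u_nil.
Qed.

Lemma Cyl_In_V_of_notSP w : left_special L [::] -> L w -> ~ SP_set L (shift w) ->
  exists v, In_V L v /\ Cyl L v w.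
Proof.
move=> ls0 Lw notSP.
have [|n [not_ls ls_below]] := ex_minimal (P := fun n => ~ left_special L (mkseq (shift w) n)).
  by apply: NNPP => all_ls; apply: notSP => n; apply: NNPP => ?; apply: all_ls; exists n.
have n_gt0 : (0 < n)%N by case: n not_ls {ls_below}.
have Cw : Cyl L (w 0 :: mkseq (shift w) n) w by split=> //; split=> //; apply: prefix_mkseq.
exists (w 0 :: mkseq (shift w) n); split=> //.
exists (w 0), (mkseq (shift w) n); do !split=> //.
- by apply/FactE; exists w.
- by case: n n_gt0 {not_ls ls_below Cw}.
- move=> k k_gt0; rewrite size_mkseq => kn; rewrite take_mkseq; last lia.
  exact: NNPP (ls_below k kn).
Qed.

Lemma In_V_Cyl_uniq v v' w : In_V L v -> In_V L v' -> Cyl L v w -> Cyl L v' w -> v = v'.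
Proof.
move=> Vv Vv' Cw Cw'.
have [u [-> [u_gt0 [wu [not_ls ls_take]]]]] := In_V_Cyl_decomp Vv Cw.
have [u' [-> [u'_gt0 [wu' [not_ls' ls_take']]]]] := In_V_Cyl_decomp Vv' Cw'.
congr (_ :: _); case: (ltngtP (size u) (size u')) => [lt | lt | eq]; last by rewrite -wu -wu' eq.
- by case: not_ls; rewrite -wu -(take_mkseq _ (ltnW lt)) wu'; apply: ls_take'.
- by case: not_ls'; rewrite -wu' -(take_mkseq _ (ltnW lt)) wu; apply: ls_take.
Qed.

Lemma In_V_Cyl_notSP v w : In_V L v -> Cyl L v w -> ~ SP_set L (shift w).
Proof. by move=> Vv /(In_V_Cyl_decomp Vv) [u [_ [_ [<- [not_ls _]]]]] SP; apply: not_ls. Qed.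

Lemma In_V_Cyl_size v w m : In_V L v -> Cyl L v w ->
  (forall k, (k <= m)%N -> left_special L (mkseq (shift w) k)) -> (m.+1 < size v)%N.
Proof.
move=> Vv /(In_V_Cyl_decomp Vv) [u [-> [_ [wu [not_ls _]]]]] ls_w /=.
by rewrite ltnS ltnNge; apply/negP => um; apply: not_ls; rewrite -wu; apply: ls_w.
Qed.

End ShiftSpace.

Section FiniteShift.
Variables (T : finType) (L : word T -> Prop).
Hypothesis hL : is_shift L.
Hypothesis hLS : forall n, exists u, left_special L u /\ (n <= size u)%N.

Lemma exists_SP : exists x, SP_set L x.
Proof.
pose good u := forall n, exists t, left_special L (u ++ t) /\ (n <= size t)%N.
have step u : good u -> exists a, True /\ good (rcons u a).
  move=> gu; suff [a ga] : exists a, good (rcons u a) by exists a.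
  apply: (finite_pigeonhole
      (P := fun a n => exists t, left_special L (rcons u a ++ t) /\ (n <= size t)%N)).
  - by move=> a m n mn [t [ls nt]]; exists t; split=> //; lia.
  - move=> n; have [[|a t] [ls nt]] := gu n.+1; first by move: nt.
    by exists a, t; rewrite cat_rcons.
have [a0 _] : exists a0 : T, True by have [[|a u] [_ //]] := hLS 1; exists a.
have good_nil : good [::] by move=> n; have [u ls_u] := hLS n; exists u.
have [x x_good] := dependent_choice_word (Q := fun _ _ => True) a0 good_nil step.
exists x => n; have [t [ls _]] := (x_good n).1 0.
by move: (left_special_take hL (size (mkseq x n)) ls); rewrite take_size_cat.
Qed.

Lemma exists_W : exists w, W_SP L w.
Proof.
have [x SPx] := exists_SP.
have [b Fb] : exists b, forall n, Fact L (b :: mkseq x n).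
  apply: (finite_pigeonhole (P := fun b n => Fact L (b :: mkseq x n))).
    by move=> b m n mn /(Fact_take hL m.+1); rewrite /= take_mkseq.
  by move=> n; have [b [_ [_ [Fb _]]]] := SPx n; exists b.
by exists (wcons b x); split=> //; apply: wcons_mem.
Qed.

End FiniteShift.

Section Measure.
Variables (T : Type) (L : word T -> Prop) (mu : (word T -> Prop) -> R).
Hypothesis hL : is_shift L.
Hypothesis hmu : prob_measure L mu.
Hypothesis hinv : sigma_invariant L mu.
Hypothesis hpos : positive_on_cylinders L mu.
Hypothesis hSP : mu (SP_set L) = R0.
Implicit Types (B C X Y : word T -> Prop).
Local Open Scope R_scope.

Lemma predext X Y : (forall w, X w <-> Y w) -> X = Y.
Proof.
by move=> XY; apply: functional_extensionality => w; apply: propositional_extensionality.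
Qed.

Lemma borel_closed X : is_closed X -> borel X.
Proof.
move=> /borel_open /borel_compl; rewrite (@predext (fun w => ~ ~ X w) X) // => w.
by split; [apply: NNPP | tauto].
Qed.

Lemma borel_setD X Y : borel X -> borel Y -> borel (fun w => X w /\ ~ Y w).
Proof.
move=> bX bY; pose G n := if n is 0 then fun w => ~ X w else Y.
have /borel_compl : borel (fun w => exists n, G n w).
  by apply: borel_union => -[|n] //; apply: borel_compl.
rewrite (@predext (fun w => ~ exists n, G n w) (fun w => X w /\ ~ Y w)) // => w.
split=> [notG | [Xw nY] [[|n] //=]].
by split=> [|Yw]; [apply: NNPP => nX |]; apply: notG; [exists 0%N | exists 1%N].
Qed.

Lemma meas_L_closed X : is_closed X -> (forall w, X w -> L w) -> meas_L L X.
Proof.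
move=> /borel_closed bX XL; exists X; split=> // w.
by split=> [Xw | []//]; split=> //; apply: XL.
Qed.

Lemma meas_L_setD B C : meas_L L B -> meas_L L C -> meas_L L (fun w => C w /\ ~ B w).
Proof.
move=> [B' [bB' BE]] [C' [bC' CE]]; exists (fun w => C' w /\ ~ B' w).
by split; [exact: borel_setD | move=> w; rewrite CE BE; tauto].
Qed.

Lemma meas_L_set0 : meas_L L (fun _ => False).
Proof. by apply: meas_L_closed => [w _ | w []]; exists 0%N => w' _ []. Qed.

Lemma meas_L_Cyl v : meas_L L (Cyl L v).
Proof. by apply: (meas_L_closed (is_closed_Cyl hL (v := v))) => w []. Qed.

Lemma meas_L_SP : meas_L L (SP_set L).
Proof. by apply: meas_L_closed; [exact: is_closed_SP | exact: SP_subset]. Qed.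

Lemma meas_L_W : meas_L L (W_SP L).
Proof. by apply: (meas_L_closed (is_closed_W hL)) => w []. Qed.

Lemma mu_set0 : mu (fun _ => False) = 0.
Proof.
have := hmu.2.2 (fun _ _ => False) (fun _ => meas_L_set0) (fun _ _ _ _ => @proj1 _ _).
rewrite (@predext (fun w => exists n : nat, False) (fun _ => False)); last first.
  by move=> w; split=> [[]|].
set c := mu _ => sum_c.
have := CV_minus _ _ _ _ (CV_shift' _ 1 _ sum_c) sum_c; rewrite Rminus_diag.
have -> : (fun n => sum_f_R0 (fun _ => c) (n + 1) - sum_f_R0 (fun _ => c) n) = fun _ => c.
  by apply: functional_extensionality => n; rewrite addn1 /=; ring.
move=> cv0; have cvc : Un_cv (fun _ => c) c.
  by move=> eps eps_gt0; exists 0%N => n _; rewrite /Rdist Rminus_diag Rabs_R0.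
exact: UL_sequence cvc cv0.
Qed.

Lemma mu_setU B C : meas_L L B -> meas_L L C -> (forall w, ~ (B w /\ C w)) ->
  mu (fun w => B w \/ C w) = mu B + mu C.
Proof.
move=> mB mC BC; pose F n := match n with 0 => B | 1 => C | _ => fun _ => False end.
have mF n : meas_L L (F n) by case: n => [|[|n]] //; exact: meas_L_set0.
have dF m n : m <> n -> forall w, ~ (F m w /\ F n w).
  by case: m n => [|[|m]] [|[|n]] //= _ w; firstorder.
have := hmu.2.2 F mF dF.
rewrite (@predext (fun w => exists n, F n w) (fun w => B w \/ C w)); last first.
  move=> w; split=> [[[|[|n]] Fw] | [Bw | Cw]];
    [by left | by right | by [] | by exists 0%N | by exists 1%N].
move/uniqueness_sum; apply=> eps eps_gt0; exists 1%N => n n_ge1.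
suff -> : sum_f_R0 (fun n => mu (F n)) n = mu B + mu C by rewrite /Rdist Rminus_diag Rabs_R0.
elim: n n_ge1 => [|[|n] IH] n_ge1 //; first lia.
by rewrite /= in IH *; rewrite IH ?mu_set0; [ring | lia].
Qed.

Lemma mu_mono B C : meas_L L B -> meas_L L C -> (forall w, B w -> C w) -> mu B <= mu C.
Proof.
move=> mB mC BC; have mCB := meas_L_setD mB mC.
rewrite (@predext C (fun w => B w \/ (C w /\ ~ B w))); last first.
  by move=> w; split=> [Cw | [/BC | []] //]; case: (classic (B w)); [left | right].
rewrite mu_setU //; last by move=> w [? []].
by have := hmu.1 _ mCB; lra.
Qed.

Lemma mu_W : mu (W_SP L) = 0.
Proof. by have := hinv meas_L_SP; rewrite hSP. Qed.

Lemma Fact_cons_exists p : Fact L p -> exists b, Fact L (b :: p).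
Proof.
move=> /(FactE hL) Cp; have := hpos Cp; rewrite -(hinv (meas_L_Cyl p)).
case: (classic (exists w, L w /\ Cyl L p (shift w))) => [[w [Lw [_ pw]]] | none].
  by exists (w 0%N); apply/(FactE hL); exists w.
rewrite (@predext (fun w => L w /\ Cyl L p (shift w)) (fun _ => False)) ?mu_set0; first lra.
by move=> w; split=> // Cw; apply: none; exists w.
Qed.

Lemma Cyl_not_subset_W p : (exists w, Cyl L p w) -> exists w, Cyl L p w /\ ~ W_SP L w.
Proof.
move=> Cp; apply: NNPP => all_W; have := hpos Cp.
have := mu_mono (meas_L_Cyl p) meas_L_W; rewrite mu_W => le0.
suff : mu (Cyl L p) <= 0 by lra.
by apply: le0 => w Cw; apply: NNPP => nW; apply: all_W; exists w.
Qed.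

End Measure.

Lemma size_le_sumn (T : Type) (v : seq T) s :
  List.In v s -> (size v <= sumn (map size s))%N.
Proof. by elim: s => [//|x s IH] /= [-> | /IH]; lia. Qed.

Section CylinderPartition.
Variables (T : Type) (L : word T -> Prop) (mu : (word T -> Prop) -> R).
Hypothesis hL : is_shift L.
Hypothesis hmu : prob_measure L mu.
Hypothesis hinv : sigma_invariant L mu.
Hypothesis hpos : positive_on_cylinders L mu.
Hypothesis hSP : mu (SP_set L) = R0.
Implicit Types (w x : word T) (p u v : seq T).

Lemma In_V_Cyl_deeper a u : (exists w, Cyl L (a :: u) w) ->
    (forall k, (k <= size u)%N -> left_special L (take k u)) ->
  exists v w, In_V L v /\ Cyl L v w /\ Cyl L (a :: u) w /\ ((size u).+1 < size v)%N.
Proof.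
move=> Cau ls_u; have [w [Cw notW]] := Cyl_not_subset_W hL hmu hinv hpos hSP Cau.
have [v [Vv Cvw]] : exists v, In_V L v /\ Cyl L v w.
  apply: (Cyl_In_V_of_notSP hL _ Cw.1 (fun SP => notW (conj Cw.1 SP))).
  by move: (ls_u 0%N (leq0n _)); rewrite take0.
exists v, w; do !split=> //; apply: In_V_Cyl_size Vv Cvw _ => k ku.
by case: Cw => _ [_ /prefixE wu]; rewrite -(take_mkseq _ ku) wu; apply: ls_u.
Qed.

Hypothesis hLS : forall n, exists u, left_special L u /\ (n <= size u)%N.

Lemma In_V_unbounded n : exists v, In_V L v /\ (n < size v)%N.
Proof.
have [u [ls_u nu]] := hLS n; have [b [_ [_ [/(FactE hL) Cbu _]]]] := ls_u.
have [|v [_ [Vv [_ [_ uv]]]]] := In_V_Cyl_deeper Cbu.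
  by move=> k _; apply: left_special_take hL _ _ ls_u.
by exists v; split=> //; lia.
Qed.

Lemma In_V_infinite : ~ exists s : seq (seq T), forall v, In_V L v -> List.In v s.
Proof.
case=> s Vs; have [v [Vv sv]] := In_V_unbounded (sumn (map size s)).
by have := size_le_sumn (Vs _ Vv); lia.
Qed.

Lemma L_partition w : L w <-> (exists v, In_V L v /\ Cyl L v w) \/ W_SP L w.
Proof.
have ls0 : left_special L [::].
  by apply: (left_special_nil hL); have [u [ls _]] := hLS 0; exists u.
split=> [Lw | [[v [_ []]] | []] //].
case: (classic (SP_set L (shift w))) => SP; first by right.
by left; exact: (Cyl_In_V_of_notSP hL ls0 Lw SP).
Qed.

Lemma Fact_cons_of_not_left_special a u p : Fact L (a :: u) -> ~ left_special L u ->
  take (size u) p = u -> Fact L p -> Fact L (a :: p).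
Proof.
move=> Fau not_ls pu Fp; have [b Fbp] := Fact_cons_exists hL hmu hinv hpos Fp.
suff <- : b = a by [].
apply: NNPP => ba; apply: not_ls; exists b, a; split=> //; split=> //.
by rewrite -pu; exact: (Fact_take hL (size u).+1 Fbp).
Qed.

End CylinderPartition.

Section LexStructure.
Variables (d : Order.disp_t) (A : finOrderType d).
Variables (L : word A -> Prop) (mu : (word A -> Prop) -> R).
Hypothesis hL : is_shift L.
Hypothesis hmu : prob_measure L mu.
Hypothesis hinv : sigma_invariant L mu.
Hypothesis hpos : positive_on_cylinders L mu.
Hypothesis hSP : mu (SP_set L) = R0.
Implicit Types (w x y e : word A) (v : seq A).

Lemma shift_interval v w w' y : In_V L v -> Cyl L v w -> Cyl L v w' ->
  (exists x, interval L w w' x /\ forall n, shift x n = y n) <->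
  interval L (shift w) (shift w') y.
Proof.
move=> Vv Cw Cw'; have [u [ev [_ [wu [not_ls _]]]]] := In_V_Cyl_decomp Vv Cw.
have [_ pw'] := Cw'; rewrite ev in pw'; case: pw' => w'0 pu'.
have pu : is_prefix u (shift w) by apply/prefixE.
split=> [[x [[Lx [wx xw']] xy]] | [Ly [wy yw']]].
  have -> : y = shift x by apply: functional_extensionality => n; rewrite xy.
  have := lex_le_between_prefix Cw.2 Cw'.2 wx xw'; rewrite ev => -[x0 _].
  have [e1 e2] : w 0%N = x 0%N /\ x 0%N = w' 0%N by split; congruence.
  by split; [exact: hL.2 | split; [exact: (lex_le_shift e1).1 | exact: (lex_le_shift e2).1]].
have uy := lex_le_between_prefix pu pu' wy yw'.
have Fwu : Fact L (w 0%N :: u) by rewrite -ev; apply/(FactE hL); exists w.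
exists (wcons (w 0%N) y); split=> //; split; last first.
  by split; [exact: (lex_le_shift (erefl (w 0%N))).2 | exact: (lex_le_shift (esym w'0)).2].
apply: (wcons_mem hL) => n.
have Fy : Fact L (w 0%N :: mkseq y (n + size u)).
  apply: (Fact_cons_of_not_left_special hL hmu hinv hpos Fwu not_ls).
    by rewrite take_mkseq ?leq_addl //; exact/prefixE.
  by apply/(FactE hL); exists y; split=> //; apply: prefix_mkseq.
by move: (Fact_take hL n.+1 Fy); rewrite /= take_mkseq ?leq_addr.
Qed.

Lemma endpoint_extreme v e : In_V L v -> Cyl L v e -> is_endpoint L e ->
  (forall y, Cyl L v y -> lex_le e y) \/ (forall y, Cyl L v y -> lex_le y e).
Proof. by move=> Vv Ce [v' [Vv' [Ce' ext]]]; rewrite (In_V_Cyl_uniq Vv Vv' Ce Ce'). Qed.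

Lemma Cyl_endpoints_coincide v e1 e2 e3 : In_V L v ->
  Cyl L v e1 -> Cyl L v e2 -> Cyl L v e3 ->
  is_endpoint L e1 -> is_endpoint L e2 -> is_endpoint L e3 ->
  e1 = e2 \/ e1 = e3 \/ e2 = e3.
Proof.
move=> Vv C1 C2 C3 /(endpoint_extreme Vv C1) E1 /(endpoint_extreme Vv C2) E2.
move=> /(endpoint_extreme Vv C3) E3; case: E1 => ?; case: E2 => ?; case: E3 => ?;
  first [by left; apply: lex_le_anti; auto | by right; left; apply: lex_le_anti; auto
        | by right; right; apply: lex_le_anti; auto].
Qed.

Lemma W_SP_acc_point x : W_SP L x -> acc_point L (is_endpoint L) x.
Proof.
move=> [Lx SPx]; split=> // n.
have Cx : exists w, Cyl L (x 0%N :: mkseq (shift x) n) w.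
  by exists x; split=> //; rewrite -mkseq_shift; apply: prefix_mkseq.
have ls_x k : (k <= size (mkseq (shift x) n))%N ->
    left_special L (take k (mkseq (shift x) n)).
  by rewrite size_mkseq => kn; rewrite take_mkseq.
have [v [w [Vv [Cw [Cxw]]]]] := In_V_Cyl_deeper hL hmu hinv hpos hSP Cx ls_x.
rewrite size_mkseq => sv.
have [e [Ce e_min]] := closed_lex_min (is_closed_Cyl hL (v := v)) (ex_intro _ w Cw).
exists e; split; first by exists v; split=> //; split=> //; left.
split.
  by move=> ex; apply: (In_V_Cyl_notSP Vv Ce); rewrite (functional_extensionality _ _ ex).
apply: (agree_trans (w' := w)).
  apply: (agree_le (n := n.+1)) => //; rewrite -(size_mkseq x n.+1).
  by apply: agree_prefix (prefix_mkseq _ _) _; rewrite mkseq_shift; case: Cxw.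
by apply: (agree_le (n := size v)); [lia | apply: agree_prefix Cw.2 Ce.2].
Qed.

Lemma acc_point_W_SP x : (exists u, left_special L u) ->
  acc_point L (is_endpoint L) x -> W_SP L x.
Proof.
move=> /(left_special_nil hL) ls0 accx; have Lx := accx.1; split=> //.
apply: NNPP => notSP; have [v [Vv Cx]] := Cyl_In_V_of_notSP hL ls0 Lx notSP.
have Cyl_near e : is_endpoint L e -> agree (size v) x e -> Cyl L v e.
  by move=> [v' [_ [[Le _] _]]] ag; split=> //; apply: prefix_agree Cx.2 ag.
have [e1 [E1 [ag1 _]]] := acc_point_avoid (size v) x x accx.
have [e2 [E2 [ag2 [_ [ne21 _]]]]] := acc_point_avoid (size v) e1 e1 accx.
have [e3 [E3 [ag3 [_ [ne31 ne32]]]]] := acc_point_avoid (size v) e1 e2 accx.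
have := Cyl_endpoints_coincide Vv (Cyl_near _ E1 ag1) (Cyl_near _ E2 ag2)
  (Cyl_near _ E3 ag3) E1 E2 E3.
by case=> [/esym | [/esym | /esym]].
Qed.

End LexStructure.

Theorem mainTheorem11 (d : Order.disp_t) (A : finOrderType d)
  (L : word A -> Prop) (mu : (word A -> Prop) -> R)
  (hL : is_shift L)
  (hLS : forall n, exists u, left_special L u /\ (n <= size u)%N)
  (hmu : prob_measure L mu)
  (hinv : sigma_invariant L mu)
  (hna : nonatomic L mu)
  (hreg : regular L mu)
  (hpos : positive_on_cylinders L mu)
  (hSP : mu (SP_set L) = R0) :
  (~ exists s : seq (seq A), forall v, In_V L v -> List.In v s) /\
  (forall w, L w <-> ((exists v, In_V L v /\ Cyl L v w) \/ W_SP L w)) /\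
  (forall v v', In_V L v -> In_V L v' -> v <> v' ->
     forall w, ~ (Cyl L v w /\ Cyl L v' w)) /\
  (forall v w, In_V L v -> ~ (Cyl L v w /\ W_SP L w)) /\
  (* (i) *)
  (forall v w w', In_V L v -> Cyl L v w -> Cyl L v w' -> lex_lt w w' ->
     forall y, (exists x, interval L w w' x /\ forall n, shift x n = y n)
               <-> interval L (shift w) (shift w') y) /\
  (* (ii) *)
  (exists w, W_SP L w) /\
  mu (W_SP L) = R0 /\
  (forall x, W_SP L x <-> acc_point L (is_endpoint L) x).
Proof.
have hLS0 : exists u, left_special L u by have [u [ls _]] := hLS 0; exists u.
split; first exact: In_V_infinite hL hmu hinv hpos hSP hLS.
split; first exact: L_partition hL hLS.
split; first by move=> v v' Vv Vv' ne w [Cv Cv']; apply/ne/(In_V_Cyl_uniq Vv Vv' Cv Cv').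
split; first by move=> v w Vv [Cw [_ SP]]; apply: In_V_Cyl_notSP Vv Cw SP.
split; first by move=> v w w' Vv Cw Cw' _ y; apply: (shift_interval hL hmu hinv hpos y Vv Cw Cw').
split; first exact: exists_W hL hLS.
split; first exact: mu_W hL hinv hSP.
move=> x; split; first exact: (W_SP_acc_point hL hmu hinv hpos hSP).
exact: (acc_point_W_SP hL hLS0).
Qed.
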